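(* Let $a,b,c$ be parameters (real or complex numbers) such that no denominator below vanishes, and put $u(n,a,b,c)=\frac{\prod_{j=0}^{n-1}(b+jc)}{\prod_{j=0}^{n-1}(a+jc)}$. Define, for $n\ge0$, $$T(2n)=\frac{(a+(n-1)c)(b+nc)}{(a+2nc)(a+(2n-1)c)},\qquad T(2n+1)=\frac{(n+1)c\,(a-b+nc)}{(a+2nc)(a+(2n+1)c)},$$ and numbers $A(n,k)$ for integers $n\ge0$ and all integers $k$ by $$A(2n,2k)=\binom{n}{k}u(n-k,a+2kc,b+kc,c),\qquad A(2n+1,2k+1)=\binom{n}{k}u(n-k,a+(2k+1)c,b+(k+1)c,c),$$ and $A(n,k)=0$ whenever $n-k$ is odd. Then $$A(0,k)=[k=0],\qquad A(n,0)=T(0)A(n-1,1)\ (n\ge1),\qquad A(n,k)=A(n-1,k-1)+T(k)A(n-1,k+1)\ (n\ge1,\ k\ge1).$$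
   Context: $\binom{n}{k}$ is the ordinary binomial coefficient, equal to $0$ for $k<0$ or $k>n$. $[P]$ is $1$ if $P$ holds and $0$ otherwise. (For $n=0$ the factor $a-c$ cancels, so $T(0)=b/a$.) *)

(* Parameters a b c live in an arbitrary numFieldType F
   (covers both the real and the complex case, e.g. R : realType, algC). *)
From HB Require Import structures.
From mathcomp Require Import all_boot all_order all_algebra.
Set Implicit Arguments. Unset Strict Implicit. Unset Printing Implicit Defensive.
Import Order.TTheory GRing.Theory Num.Theory.
Local Open Scope ring_scope.

Section Defs.
Variable F : numFieldType.

Definition u (n : nat) (a b c : F) : F :=
  (\prod_(j < n) (b + j%:R * c)) / (\prod_(j < n) (a + j%:R * c)).

(* T(k); T(0) = b/a (the factor a - c cancels, as stated in the paper). *)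
Definition T (a b c : F) (k : nat) : F :=
  if k == 0%N then b / a
  else if odd k then
    let n := k./2 in
    (n.+1%:R * c * (a - b + n%:R * c)) /
      ((a + (2 * n)%:R * c) * (a + (2 * n).+1%:R * c))
  else
    let n := k./2 in
    ((a + (n%:R - 1) * c) * (b + n%:R * c)) /
      ((a + (2 * n)%:R * c) * (a + ((2 * n)%:R - 1) * c)).

(* A(n,k) for k a natural number:
   A(2m,2j)     = C(m,j) u(m-j, a+2jc, b+jc, c)
   A(2m+1,2j+1) = C(m,j) u(m-j, a+(2j+1)c, b+(j+1)c, c)
   A(n,k) = 0 if n - k odd.
   (When j > m the binomial vanishes, so the truncated m - j is harmless.) *)
Definition Anat (a b c : F) (n k : nat) : F :=
  if odd (n + k) then 0
  else
    let m := n./2 in let j := k./2 in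
    if odd n then
      'C(m, j)%:R * u (m - j) (a + (2 * j).+1%:R * c) (b + j.+1%:R * c) c
    else
      'C(m, j)%:R * u (m - j) (a + (2 * j)%:R * c) (b + j%:R * c) c.

(* A(n,k) for all integers k: for negative k the binomial coefficient
   C(m, j) has j < 0, hence vanishes, so A(n,k) = 0. *)
Definition A (a b c : F) (n : nat) (k : int) : F :=
  match k with
  | Posz k' => Anat a b c n k'
  | Negz _ => 0
  end.

End Defs.

From HB Require Import structures.
From mathcomp Require Import all_boot all_order all_algebra.
From mathcomp Require Import ring.
Import Order.TTheory GRing.Theory Num.Theory.
Local Open Scope ring_scope.

(* Writing both u-factors of A as products rising x t p = prod_(i < p) (x + (t + i) c),
   each parity case of the recurrence reduces, once the common products are cancelled,
   to a rational identity in a, b, c whose only combinatorial input is Pascal's rule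
   and (k + 1) C(n, k + 1) = (n - k) C(n, k). *)

Section Corollary1.
Variable F : numFieldType.
Variables a b c : F.

Definition rising (x : F) (t p : nat) : F := \prod_(i < p) (x + (t + i)%:R * c).

Lemma rising0 x t : rising x t 0 = 1.
Proof. by rewrite /rising big_ord0. Qed.

Lemma risingSl x t p : rising x t p.+1 = (x + t%:R * c) * rising x t.+1 p.
Proof.
rewrite /rising big_ord_recl addn0; congr (_ * _).
by apply: eq_bigr => i _; rewrite /= addnS addSn.
Qed.

Lemma risingSr x t p : rising x t p.+1 = rising x t p * (x + (t + p)%:R * c).
Proof. by rewrite /rising big_ord_recr. Qed.

Lemma u_rising p t s :
  u p (a + t%:R * c) (b + s%:R * c) c = rising b s p / rising a t p.
Proof.
by rewrite /u /rising; congr (_ / _); apply: eq_bigr => i _; rewrite natrD mulrDl addrA.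
Qed.

Lemma Anat_even_even m j :
  Anat a b c m.*2 j.*2 = 'C(m, j)%:R * (rising b j (m - j) / rising a j.*2 (m - j)).
Proof. by rewrite /Anat -doubleD odd_double !doubleK odd_double u_rising -mul2n. Qed.

Lemma Anat_odd_odd m j :
  Anat a b c m.*2.+1 j.*2.+1 =
  'C(m, j)%:R * (rising b j.+1 (m - j) / rising a j.*2.+1 (m - j)).
Proof.
by rewrite /Anat addSn addnS -doubleD /= odd_double /= !uphalf_double odd_double u_rising -mul2n.
Qed.

Lemma Anat_even_odd m j : Anat a b c m.*2 j.*2.+1 = 0.
Proof. by rewrite /Anat addnS -doubleD /= odd_double. Qed.

Lemma Anat_odd_even m j : Anat a b c m.*2.+1 j.*2 = 0.
Proof. by rewrite /Anat addSn -doubleD /= odd_double. Qed.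

Lemma A_init k : A a b c 0 k = (k == 0)%:R.
Proof.
case: k => [[|k]|//] /=; rewrite -[0%N]/(0.*2).
  by rewrite Anat_even_even bin0 subnn !rising0 divr1 mulr1.
rewrite -[k]odd_double_half; case: (odd k); rewrite ?add1n ?add0n.
  by rewrite -doubleS Anat_even_even bin_small // mul0r.
by rewrite Anat_even_odd.
Qed.

Lemma T_even j : T a b c j.+1.*2 =
  (a + j%:R * c) * (b + j.+1%:R * c) / ((a + j.+1.*2%:R * c) * (a + j.*2.+1%:R * c)).
Proof. by rewrite /T double_eq0 odd_double doubleK mul2n doubleS -!natr1 !addrK. Qed.

Lemma T_odd j : T a b c j.*2.+1 =
  j.+1%:R * c * (a - b + j%:R * c) / ((a + j.*2%:R * c) * (a + j.*2.+1%:R * c)).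
Proof. by rewrite /T /= odd_double uphalf_double mul2n. Qed.

Lemma rising_shift x t p :
  rising x t p * (x + (t + p)%:R * c) = (x + t%:R * c) * rising x t.+1 p.
Proof. by rewrite -risingSr risingSl. Qed.

Lemma binS_ratio n k : 'C(n, k.+1)%:R = (n - k)%:R * 'C(n, k)%:R / k.+1%:R :> F.
Proof. by rewrite -natrM -mul_bin_left natrM mulrC mulKf ?pnatr_eq0. Qed.

Hypothesis hden : forall m : nat, a + m%:R * c != 0.

Lemma den_neq0 m (k : F) : k = m%:R -> a + k * c != 0.
Proof. by move->; apply: hden. Qed.

Lemma rising_a_neq0 t p : rising a t p != 0.
Proof. by apply/prodf_neq0 => i _; apply: hden. Qed.

Lemma rising_a_shift t p :
  rising a t p = (a + t%:R * c) * rising a t.+1 p / (a + (t + p)%:R * c).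
Proof. by rewrite -rising_shift mulfK ?hden. Qed.

Lemma Anat_rec_even m j :
  Anat a b c m.+1.*2 j.+1.*2 =
  Anat a b c m.*2.+1 j.*2.+1 + T a b c j.+1.*2 * Anat a b c m.*2.+1 j.+1.*2.+1.
Proof.
rewrite Anat_even_even !Anat_odd_odd T_even subSS.
have [ltmj | /subnK <-] := ltnP m j.
  by rewrite !bin_small ?ltnS // ?mul0r ?mulr0 ?addr0 // ltnW.
case: (m - j)%N => [|q]; rewrite ?add0n ?addnK.
  by rewrite subnn !binn bin_small // !rising0 mul0r mulr0 addr0.
rewrite addSn subSS addnK binS natrD binS_ratio subSn ?leq_addl // addnK.
rewrite (rising_a_shift j.*2.+1) !risingSl.
have := rising_a_neq0 j.+1.*2.+1 q.
set X := rising a _ q => X_neq0.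
rewrite -!mul2n; field; rewrite X_neq0 /=; apply/and4P; split.
- by rewrite addrC natr1 pnatr_eq0.
- by apply: (den_neq0 (2 * j).+1); ring.
- by apply: (den_neq0 (2 * j).+2); ring.
- by apply: (den_neq0 (2 * j + q).+2); ring.
Qed.

Lemma Anat_rec_odd m j :
  Anat a b c m.*2.+1 j.*2.+1 =
  Anat a b c m.*2 j.*2 + T a b c j.*2.+1 * Anat a b c m.*2 j.+1.*2.
Proof.
rewrite Anat_odd_odd !Anat_even_even T_odd.
have [ltmj | /subnK <-] := ltnP m j.
  by rewrite !bin_small // ?mul0r ?mulr0 ?addr0 // ltnW.
case: (m - j)%N => [|q]; rewrite ?add0n ?addnK.
  by rewrite subnn !binn bin_small // !rising0 mul0r mulr0 addr0.
rewrite addSn subSS addnK binS_ratio subSn ?leq_addl // addnK.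
rewrite (risingSr b j.+1) !risingSl (rising_a_shift j.*2.+1).
have := rising_a_neq0 j.+1.*2 q.
set X := rising a _ q => X_neq0.
rewrite -!mul2n; field; rewrite X_neq0 /=; apply/and4P; split.
- by rewrite addrC natr1 pnatr_eq0.
- by apply: (den_neq0 (2 * j).+1); ring.
- by apply: (den_neq0 (2 * j)); ring.
- by apply: (den_neq0 (2 * j + q).+1); ring.
Qed.

Lemma Anat_rec n k :
  Anat a b c n.+1 k.+1 = Anat a b c n k + T a b c k.+1 * Anat a b c n k.+2.
Proof.
rewrite -[n]odd_double_half -[k]odd_double_half.
case: (odd n) (odd k) => [] []; rewrite ?add1n ?add0n.
- exact: Anat_rec_even.
- by rewrite -!doubleS Anat_even_odd !Anat_odd_even mulr0 addr0.
- by rewrite -!doubleS !Anat_even_odd Anat_odd_even mulr0 addr0.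
- exact: Anat_rec_odd.
Qed.

Lemma A_rec0 n : A a b c n.+1 0 = T a b c 0 * A a b c n 1.
Proof.
rewrite /= -[n]odd_double_half; case: (odd n); rewrite ?add1n ?add0n.
  rewrite -doubleS -[0%N]/(0.*2) -[1%N]/(0.*2.+1) Anat_even_even Anat_odd_odd.
  rewrite /T eqxx !bin0 !subn0 risingSl (risingSl a) -mul2n muln0.
  have := rising_a_neq0 1 n./2; have := hden 0; rewrite mul0r addr0.
  set X := rising a 1 _ => a_neq0 X_neq0.
  by field; rewrite a_neq0 X_neq0.
by rewrite -[0%N]/(0.*2) -[1%N]/(0.*2.+1) Anat_odd_even Anat_even_odd mulr0.
Qed.

Lemma A_rec n k : (1 <= k)%N ->
  A a b c n.+1 k%:Z = A a b c n (k%:Z - 1) + T a b c k * A a b c n (k%:Z + 1).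
Proof.
case: k => // k _.
have -> : k.+1%:Z - 1 = k by rewrite -addn1 PoszD addrK.
have -> : k.+1%:Z + 1 = k.+2 by rewrite -PoszD addn1.
exact: Anat_rec.
Qed.

End Corollary1.

Theorem corollary1 (F : numFieldType) (a b c : F)
  (hden : forall m : nat, a + m%:R * c != 0) :
  (forall k : int, A a b c 0 k = (k == 0)%:R) /\
  (forall n : nat, A a b c n.+1 0 = T a b c 0 * A a b c n 1) /\
  (forall (n k : nat), (1 <= k)%N ->
     A a b c n.+1 k%:Z = A a b c n (k%:Z - 1) + T a b c k * A a b c n (k%:Z + 1)).
Proof.
split; first exact: A_init.
split; first exact: A_rec0.
exact: A_rec.
Qed.
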